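(* Let $A$ be an $n\times n$ matrix over $\mathbb{C}$ (or $\mathbb{R}$) such that $A^3\neq 0$. Then the following are equivalent: (i) $A\otimes A^3\otimes A^2=A^2\otimes A^3\otimes A$; (ii) $A^2\otimes A=A\otimes A^2$; (iii) $A^2=\mu A$ for some scalar $\mu$.
   Context: Here $\otimes$ denotes the Kronecker product of matrices: for matrices $A=[a_{ij}]$ and $B$, $A\otimes B$ is the block matrix whose $(i,j)$ block is $a_{ij}B$. *)

From HB Require Import structures.
From mathcomp Require Import all_boot all_order all_algebra.
From mathcomp Require Export mxtens.
Set Implicit Arguments. Unset Strict Implicit. Unset Printing Implicit Defensive.
(* Kronecker product: mathcomp-real-closed's [tensmx], notation [A *t B]:
   (A *t B) (i1*p+i2) (j1*q+j2) = A i1 j1 * B i2 j2  (block (i,j) = a_ij B). *)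

From mathcomp Require Import all_boot all_order all_algebra.
Import GRing.Theory Num.Theory.
Local Open Scope ring_scope.

(* Kronecker products compare entrywise: [X *t Y = Z *t W] says exactly
   [X i k * Y j l = Z i k * W j l] for all indices.  Hence a nonzero middle
   factor [A ^+ 3] cancels from (i), giving (ii); and [A ^+ 2 *t A = A *t A ^+ 2]
   says the entries of [A ^+ 2] and [A] are pairwise proportional, which for
   [A != 0] means [A ^+ 2] is a multiple of [A], the ratio being read off at a
   nonzero entry of [A]. *)

Lemma tensmx_eqP {R : pzRingType} {m n p q} (X Z : 'M[R]_(m, n)) (Y W : 'M[R]_(p, q)) :
  X *t Y = Z *t W <-> forall i k j l, X i k * Y j l = Z i k * W j l.
Proof.
split=> [XY_ZW i k j l | H]; first by rewrite -!tensmxE XY_ZW.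
apply/matrixP=> a b.
by case: (mxtens_indexP a) => i j; case: (mxtens_indexP b) => k l; rewrite !tensmxE.
Qed.

Lemma tensmx3_eqP {R : pzRingType} {m n p q r s} (X Z : 'M[R]_(m, n))
    (Y V : 'M[R]_(p, q)) (W U : 'M[R]_(r, s)) :
  (X *t Y) *t W = (Z *t V) *t U <->
  forall i k j l u v, X i k * Y j l * W u v = Z i k * V j l * U u v.
Proof.
split=> [/tensmx_eqP H i k j l u v | H].
  by have := H (mxtens_index (i, j)) (mxtens_index (k, l)) u v; rewrite !tensmxE.
apply/tensmx_eqP=> a b u v.
by case: (mxtens_indexP a) => i j; case: (mxtens_indexP b) => k l; rewrite !tensmxE.
Qed.

Lemma tensmx_cancel_mid {R : idomainType} {m n p q r s} (X Z : 'M[R]_(m, n))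
    (W U : 'M[R]_(r, s)) {C : 'M[R]_(p, q)} :
  C != 0 -> (X *t C) *t W = (Z *t C) *t U <-> X *t W = Z *t U.
Proof.
case/matrix0Pn=> j [l Cjl_neq0].
split=> [/tensmx3_eqP H | /tensmx_eqP H]; last first.
  by apply/tensmx3_eqP=> i k *; rewrite mulrAC H mulrAC.
apply/tensmx_eqP=> i k u v.
by have := H i k j l u v; rewrite mulrAC [Z i k * _ * _]mulrAC => /(mulIf Cjl_neq0).
Qed.

Lemma tensmxC_scaleP {R : fieldType} {m n} (X Y : 'M[R]_(m, n)) :
  X != 0 -> Y *t X = X *t Y <-> exists mu : R, Y = mu *: X.
Proof.
case/matrix0Pn=> i [j Xij_neq0].
split=> [/tensmx_eqP H | [mu ->]]; last first.
  by apply/tensmx_eqP=> a b e f; rewrite !mxE mulrCA mulrA.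
exists (Y i j / X i j); apply/matrixP=> a b.
by rewrite mxE mulrAC [Y i j * _]mulrC -H mulfK.
Qed.

Theorem theorem2p3 (R : numFieldType) (n : nat) (A : 'M[R]_n) :
  A ^+ 3 != 0 ->
  [/\ (tensmx (tensmx A (A ^+ 3)) (A ^+ 2) = tensmx (tensmx (A ^+ 2) (A ^+ 3)) A
         <-> tensmx (A ^+ 2) A = tensmx A (A ^+ 2)),
      (tensmx (A ^+ 2) A = tensmx A (A ^+ 2) <-> exists mu : R, A ^+ 2 = mu *: A) &
      (exists mu : R, A ^+ 2 = mu *: A) <->
         tensmx (tensmx A (A ^+ 3)) (A ^+ 2) = tensmx (tensmx (A ^+ 2) (A ^+ 3)) A].
Proof.
move=> A3_neq0.
have A_neq0 : A != 0 by apply: contraNneq A3_neq0 => ->; rewrite expr0n.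
have i_ii := tensmx_cancel_mid A (A ^+ 2) (A ^+ 2) A A3_neq0.
have ii_iii := tensmxC_scaleP A (A ^+ 2) A_neq0.
have sym : A *t A ^+ 2 = A ^+ 2 *t A <-> A ^+ 2 *t A = A *t A ^+ 2 by split=> ->.
by split; tauto.
Qed.
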